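(* Let $I$ be an infinite set of positive integers and for $i \in I$ let $G_i$ be a finite group and $H_i \le G_i$ a subgroup, with $|G_i| \to \infty$. Suppose there is a constant $c>0$ with $|H_i| \le (\log|G_i|)^c$ for all $i \in I$. Then the family $(G_i,H_i)_{i \in I}$ is distinguishable if and only if there is a constant $c'>0$ such that, for all sufficiently large $i \in I$, $H_i$ contains a non-identity element $h$ whose conjugacy class $h^{G_i}$ in $G_i$ satisfies $|h^{G_i}| \le (\log|G_i|)^{c'}$.
   Context: For a finite group $G$, let $\mathrm{Irr}(G)$ be its set of complex irreducible characters and $d_\chi=\chi(e)$. For $H \le G$ let $D_H = \frac{1}{|G|}\sum_{\chi \in \mathrm{Irr}(G)} d_\chi \big|\sum_{h \in H, h \neq e}\chi(h)\big|$ (the $L_1$ distance between the distributions $P_H(\chi)=\frac{d_\chi}{|G|}\sum_{h\in H}\chi(h)$ and $P_{\{e\}}$ on $\mathrm{Irr}(G)$ produced by weak quantum Fourier sampling). A family $(G_i,H_i)_{i \in I}$ with $H_i \le G_i$, $I$ an infinite set of positive integers and $|G_i| \to \infty$, is called distinguishable if there is a constant $c''>0$ such that $D_{H_i} \ge (\log|G_i|)^{-c''}$ for all sufficiently large $i \in I$, and indistinguishable otherwise. *)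

From HB Require Import structures.
From mathcomp Require Import all_boot all_order all_algebra all_fingroup all_solvable all_field all_character.
From mathcomp Require Import all_classical all_reals all_analysis.
Set Implicit Arguments. Unset Strict Implicit. Unset Printing Implicit Defensive.
Import Order.TTheory GRing.Theory Num.Theory.
Local Open Scope ring_scope.
Local Open Scope classical_set_scope.

Definition DH (gT : finGroupType) (G H : {group gT}) : algC :=
  (#|G|%:R)^-1 *
  \sum_(i : Iirr G) ('chi[G]_i 1%g * `| \sum_(h in H | h != 1%g) 'chi[G]_i h |).

(* Embedding of (real) algebraic complex numbers into a realType R:
   the supremum of the rationals below x (equals x when x is real). *)
Definition algC_to_real (R : realType) (x : algC) : R :=
  sup ((fun q : rat => (ratr q : R)) @` [set q : rat | (ratr q : algC) <= x]).

Definition distinguishable (R : realType) (gT : nat -> finGroupType)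
  (G H : forall i, {group gT i}) (I : set nat) : Prop :=
  exists c2 : R, 0 < c2 /\
    exists N : nat, forall i : nat, I i -> (N <= i)%N ->
      ln (#|G i|%:R : R) `^ (- c2) <= algC_to_real R (DH (G i) (H i)).

From HB Require Import structures.
From mathcomp Require Import all_boot all_order all_algebra all_fingroup all_solvable all_field all_character.
From mathcomp Require Import all_classical all_reals all_analysis.
From mathcomp Require Import ring lra.
Set Implicit Arguments. Unset Strict Implicit. Unset Printing Implicit Defensive.
Import Order.TTheory GRing.Theory Num.Theory.
Local Open Scope ring_scope.

(* Both directions come from the second orthogonality relation
   sum_chi chi(x) conj(chi(y)) = |C_G(x)| [x ~ y].  Pairing the inner sums of
   D_H with the column of a non-identity h in H gives D_H >= 1/|h^G|.
   Conversely 2 t d_chi |chi(h)| <= t^2 d_chi^2 + |chi(h)|^2, summed over chi,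
   gives D_H <= sum_{h in H, h <> 1} (t/2 + 1/(2 t |h^G|)) for every t > 0.
   If all non-identity classes meeting H have size >= (log|G|)^(2a), the choice
   t ~ (log|G|)^(-a) yields D_H <= 2 |H| (log|G|)^(-a), which is below
   (log|G|)^(-c'') once a > c + c'' and log|G| > 2.  As D_H is an algebraic
   number, t is taken rational so that these bounds transfer to the reals. *)

Definition class_bound (F : numFieldType) (gT : finGroupType) (G H : {group gT})
    (t : F) : F :=
  \sum_(h in H | h != 1%g) (t / 2 + (2 * t * #|(h ^: G)%g|%:R)^-1).

Lemma ratr_class_bound (F : numFieldType) (gT : finGroupType) (G H : {group gT})
    (q : rat) :
  ratr (class_bound G H q) = class_bound G H (ratr q : F).
Proof.
rewrite rmorph_sum; apply: eq_bigr => h _.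
by rewrite rmorphD rmorphM !fmorphV !rmorphM !rmorph_nat.
Qed.

Section DistanceBounds.
Variables (gT : finGroupType) (G H : {group gT}).
Hypothesis sHG : H \subset G.

Lemma sum_irr_sqr_norm x : x \in G ->
  \sum_(i : Iirr G) `|'chi[G]_i x| ^+ 2 = #|('C_G[x])%g|%:R.
Proof.
move=> Gx; have := second_orthogonality_relation x Gx.
rewrite class_refl mulr1n => <-.
by apply: eq_bigr => i _; rewrite normCK.
Qed.

Lemma natr_card_cent1_class x :
  (#|G|%:R : algC) = #|('C_G[x])%g|%:R * #|(x ^: G)%g|%:R.
Proof. by rewrite -natrM -index_cent1 Lagrange // subsetIl. Qed.

Lemma DH_ge0 : 0 <= DH G H.
Proof.
rewrite /DH mulr_ge0 ?invr_ge0 ?ler0n // sumr_ge0 // => i _.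
by rewrite mulr_ge0 // ltW ?irr1_gt0.
Qed.

Lemma card_cent1_le_sum_irr1_norm x : x \in H -> x != 1%g ->
  (#|('C_G[x])%g|%:R : algC)
    <= \sum_(i : Iirr G) 'chi[G]_i 1%g * `|\sum_(h in H | h != 1%g) 'chi[G]_i h|.
Proof.
move=> Hx x_neq1; pose f i := \sum_(h in H | h != 1%g) 'chi[G]_i h.
have Gx : x \in G := fintype.subsetP sHG x Hx.
have orth : \sum_i f i * ('chi[G]_i x)^*
    = \sum_(h in H | h != 1%g) (#|('C_G[h])%g|%:R *+ (h \in (x ^: G)%g) : algC).
  under eq_bigr do rewrite mulr_suml.
  by rewrite exchange_big; apply: eq_bigr => h _; rewrite second_orthogonality_relation.
have cent_le : (#|('C_G[x])%g|%:R : algC) <= `|\sum_i f i * ('chi[G]_i x)^*|.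
  have terms_ge0 (P : pred gT) :
      0 <= \sum_(h | P h) (#|('C_G[h])%g|%:R *+ (h \in (x ^: G)%g) : algC).
    by apply: sumr_ge0 => h _; rewrite mulrn_wge0.
  rewrite orth ger0_norm // (bigD1 x) /=; last by rewrite Hx.
  by rewrite class_refl mulr1n lerDl.
apply: (le_trans cent_le); apply: le_trans (ler_norm_sum _ _ _) _.
apply: ler_sum => i _; rewrite normrM norm_conjC mulrC.
by rewrite ler_wpM2r // char1_ge_norm ?irr_char.
Qed.

Lemma inv_card_class_le_DH x : x \in H -> x != 1%g ->
  (#|(x ^: G)%g|%:R)^-1 <= DH G H.
Proof.
move=> Hx x_neq1; have G_gt0 : (0 : algC) < #|G|%:R by rewrite ltr0n cardG_gt0.
have C_gt0 : (0 : algC) < #|('C_G[x])%g|%:R by rewrite ltr0n cardG_gt0.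
apply: le_trans (ler_wpM2l _ (card_cent1_le_sum_irr1_norm Hx x_neq1));
  last by rewrite invr_ge0 ltW.
by rewrite (natr_card_cent1_class x) invfM mulrAC mulVf ?mul1r ?gt_eqF.
Qed.

Lemma sum_irr1_mul_norm_le t h : 0 < t -> h \in G ->
  (\sum_(i : Iirr G) 'chi[G]_i 1%g * `|'chi[G]_i h|) * (2 * t)
    <= t ^+ 2 * #|G|%:R + #|('C_G[h])%g|%:R.
Proof.
move=> t_gt0 Gh.
have -> : (#|G|%:R : algC) = #|('C_G[1%g])%g|%:R by rewrite cent11T finset.setIT.
rewrite -!sum_irr_sqr_norm ?group1 // mulr_suml mulr_sumr -big_split.
apply: ler_sum => i _ /=.
have d_ge0 : 0 <= 'chi[G]_i 1%g by rewrite ltW ?irr1_gt0.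
have td_real : t * 'chi[G]_i 1%g \is Num.real.
  by apply: rpredM; [exact: gtr0_real | exact: ger0_real].
have [amgm _] := real_leif_mean_square_scaled td_real (normr_real ('chi[G]_i h)).
rewrite [`|'chi[G]_i 1%g|]ger0_norm // -exprMn.
have -> : 'chi[G]_i 1%g * `|'chi[G]_i h| * (2 * t)
    = t * 'chi[G]_i 1%g * `|'chi[G]_i h| *+ 2 by rewrite -mulr_natr; ring.
exact: amgm.
Qed.

Lemma DH_le_class_bound t : 0 < t -> DH G H <= class_bound G H t.
Proof.
move=> t_gt0; have G_gt0 : (0 : algC) < #|G|%:R by rewrite ltr0n cardG_gt0.
pose S h := \sum_(i : Iirr G) 'chi[G]_i 1%g * `|'chi[G]_i h|.
apply: (@le_trans _ _ (#|G|%:R^-1 * \sum_(h in H | h != 1%g) S h)).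
  apply: ler_wpM2l; first by rewrite invr_ge0 ltW.
  rewrite /S exchange_big /=; apply: ler_sum => i _; rewrite -mulr_sumr.
  by apply: ler_wpM2l; [rewrite ltW ?irr1_gt0 | exact: ler_norm_sum].
rewrite mulr_sumr; apply: ler_sum => h /andP [Hh _].
have Gh : h \in G := fintype.subsetP sHG h Hh.
have C_gt0 : (0 : algC) < #|('C_G[h])%g|%:R by rewrite ltr0n cardG_gt0.
have class_gt0 : (0 : algC) < #|(h ^: G)%g|%:R.
  by rewrite ltr0n card_gt0; apply/set0Pn; exists h; apply: class_refl.
have scale_gt0 : 0 < 2 * t * #|G|%:R by rewrite !mulr_gt0.
rewrite -(ler_pM2r scale_gt0).
have -> : #|G|%:R^-1 * S h * (2 * t * #|G|%:R) = S h * (2 * t).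
  by field; rewrite gt_eqF.
have -> : (t / 2 + (2 * t * #|(h ^: G)%g|%:R)^-1) * (2 * t * #|G|%:R)
    = t ^+ 2 * #|G|%:R + #|('C_G[h])%g|%:R.
  by rewrite (natr_card_cent1_class h); field; rewrite !gt_eqF.
exact: sum_irr1_mul_norm_le.
Qed.

End DistanceBounds.

Section RealEmbedding.
Variable R : realType.

Lemma ratr_le_algC_to_real (x : algC) (q : rat) : x \is Num.real ->
  ratr q <= x -> (ratr q : R) <= algC_to_real R x.
Proof.
move=> x_real qx; apply: ub_le_sup; last by exists q.
exists (ratr (Num.ceil x)%:~R) => _ [r /= rx <-].
rewrite ler_rat -(ler_rat algC) ratr_int.
exact: le_trans rx (real_ceil_ge x_real).
Qed.

Lemma algC_to_real_le_ratr (x : algC) (p : rat) : x \is Num.real ->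
  x <= ratr p -> algC_to_real R x <= ratr p.
Proof.
move=> x_real xp; apply: ge_sup.
  exists (ratr (Num.floor x)%:~R), (Num.floor x)%:~R => //=.
  by rewrite ratr_int real_floor_le.
by move=> _ [r /= rx <-]; rewrite ler_rat -(ler_rat algC) (le_trans rx).
Qed.

End RealEmbedding.

Lemma class_term_le (R : realFieldType) (t m k : R) :
  0 < m -> m^-1 < t -> t < 2 / m -> m ^+ 2 <= k ->
  t / 2 + (2 * t * k)^-1 <= 2 / m.
Proof.
move=> m_gt0 t_gt t_lt mk.
have t_gt0 : 0 < t by apply: lt_trans t_gt; rewrite invr_gt0.
have tm_gt1 : 1 < t * m by rewrite -ltr_pdivrMr // div1r.
have k_gt0 : 0 < k by apply: lt_le_trans mk; rewrite exprn_gt0.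
have k_term : (2 * t * k)^-1 <= (2 * t * m ^+ 2)^-1.
  by rewrite lef_pV2 ?posrE ?mulr_gt0 ?exprn_gt0 // ler_pM2l ?mulr_gt0.
have m_term : (2 * t * m ^+ 2)^-1 < (2 * m)^-1.
  by rewrite ltf_pV2 ?posrE ?mulr_gt0 ?exprn_gt0 //; nra.
have half_inv : (2 * m)^-1 = m^-1 / 2 by rewrite invfM mulrC.
rewrite half_inv in m_term; lra.
Qed.

Section RealDistanceBounds.
Variables (R : realType) (gT : finGroupType) (G H : {group gT}).
Hypothesis sHG : H \subset G.

Lemma DH_real : DH G H \is Num.real.
Proof. exact/ger0_real/DH_ge0. Qed.

Lemma inv_card_class_le_algC_to_real_DH x : x \in H -> x != 1%g ->
  (#|(x ^: G)%g|%:R : R)^-1 <= algC_to_real R (DH G H).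
Proof.
move=> Hx x_neq1.
have := ratr_le_algC_to_real R (q := (#|(x ^: G)%g|%:R)^-1) DH_real.
by rewrite !fmorphV !rmorph_nat; apply; apply: inv_card_class_le_DH.
Qed.

Lemma algC_to_real_DH_le (m : R) : 0 < m ->
    (forall h, h \in H -> h != 1%g -> m ^+ 2 <= #|(h ^: G)%g|%:R) ->
  algC_to_real R (DH G H) <= 2 * #|H|%:R / m.
Proof.
move=> m_gt0 large.
have m_lt : m^-1 < 2 / m by rewrite -[ltLHS]mul1r ltr_pM2r ?invr_gt0 // ltr1n.
have [q] := rat_in_itvoo m_lt; rewrite in_itv /= => /andP [q_gt q_lt].
have q_gt0 : 0 < q by rewrite -(ltr0q R) (lt_trans _ q_gt) ?invr_gt0.
apply: le_trans (_ : class_bound G H (ratr q : R) <= _).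
  rewrite -ratr_class_bound algC_to_real_le_ratr ?DH_real //.
  by rewrite ratr_class_bound DH_le_class_bound ?ltr0q.
apply: le_trans (_ : \sum_(h in H | h != 1%g) 2 / m <= _).
  by apply: ler_sum => h /andP [Hh h_neq1]; apply: class_term_le; rewrite ?large.
rewrite [X in _ <= X](_ : _ = \sum_(h in H) 2 / m); last first.
  by rewrite sumr_const mulr_natr mulrnAl.
rewrite [X in _ <= X](bigID (fun h => h != 1%g)) /= lerDl.
by apply: sumr_ge0 => h _; rewrite divr_ge0 // ltW.
Qed.

End RealDistanceBounds.

Lemma ln_natr_gt (R : realType) (x : R) (n : nat) :
  (Num.bound (expR x) <= n)%N -> x < ln (n%:R : R).
Proof.
move=> bound_le_n.
have expR_lt : expR x < n%:R.
  by apply: lt_le_trans (archi_boundP (ltW (expR_gt0 x))) _; rewrite ler_nat.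
rewrite -[ltLHS]expRK ltr_ln ?posrE ?expR_gt0 //.
exact: lt_trans (expR_gt0 x) expR_lt.
Qed.

Lemma powR_gap (R : realType) (L c d : R) :
  2 < L -> 2 * L `^ c / L `^ (c + d + 1) < L `^ (- d).
Proof.
move=> L_gt2; have L_gt0 : 0 < L by lra.
have Lc_gt0 := powR_gt0 c L_gt0; have Ld_gt0 := powR_gt0 d L_gt0.
have L_neq0 : L != 0 by rewrite gt_eqF.
rewrite !powRD ?L_neq0 ?implybT // powRr1 ?ltW // powRN.
have -> : 2 * L `^ c / (L `^ c * L `^ d * L) = 2 / L * (L `^ d)^-1.
  by field; rewrite !gt_eqF.
by rewrite -[ltRHS]mul1r ltr_pM2r ?invr_gt0 // ltr_pdivrMr // mul1r.
Qed.

Section Dichotomy.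
Variables (R : realType) (gT : finGroupType) (G H : {group gT}).
Hypothesis sHG : H \subset G.

Lemma powRN_le_algC_to_real_DH (L c1 : R) x : x \in H -> x != 1%g ->
  #|(x ^: G)%g|%:R <= L `^ c1 -> L `^ (- c1) <= algC_to_real R (DH G H).
Proof.
move=> Hx x_neq1 small; apply: le_trans (inv_card_class_le_algC_to_real_DH R sHG Hx x_neq1).
have class_gt0 : (0 : R) < #|(x ^: G)%g|%:R.
  by rewrite ltr0n card_gt0; apply/set0Pn; exists x; apply: class_refl.
by rewrite powRN lef_pV2 ?posrE // (lt_le_trans class_gt0).
Qed.

Lemma exists_small_class (L c d : R) : 2 < L ->
    #|H|%:R <= L `^ c -> L `^ (- d) <= algC_to_real R (DH G H) ->
  exists2 h : gT, h \in H &
    h != 1%g /\ (#|(h ^: G)%g|%:R : R) <= L `^ ((c + d + 1) * 2).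
Proof.
move=> L_gt2 H_small DH_large; apply: contrapT => no_small_class.
have L_gt0 : 0 < L by lra.
have La_gt0 := powR_gt0 (c + d + 1) L_gt0.
have large h : h \in H -> h != 1%g -> (L `^ (c + d + 1)) ^+ 2 <= #|(h ^: G)%g|%:R.
  move=> Hh h_neq1; rewrite -powR_mulrn ?powR_ge0 // -powRrM leNgt.
  by apply/negP => /ltW small; apply: no_small_class; exists h.
have := le_trans DH_large (algC_to_real_DH_le sHG La_gt0 large).
apply/negP; rewrite -ltNge; apply: le_lt_trans (powR_gap c d L_gt2).
by rewrite ler_pM2r ?invr_gt0 // ler_pM2l.
Qed.

End Dichotomy.

Unset Implicit Arguments.
Local Open Scope classical_set_scope.

Theorem theorem6 (R : realType) (I : set nat) (gT : nat -> finGroupType)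
  (G H : forall i, {group gT i})
  (I_inf : infinite_set I)
  (I_pos : forall i, I i -> (0 < i)%N)
  (HsubG : forall i, I i -> H i \subset G i)
  (G_unbounded : forall M : nat, exists N : nat,
      forall i, I i -> (N <= i)%N -> (M <= #|G i|)%N)
  (c : R) (c_pos : 0 < c)
  (H_small : forall i, I i -> (#|H i|%:R : R) <= ln (#|G i|%:R : R) `^ c) :
  distinguishable R G H I <->
  exists c1 : R, 0 < c1 /\
    exists N : nat, forall i, I i -> (N <= i)%N ->
      exists2 h : gT i, h \in H i &
        (h != 1%g) /\ (#|(h ^: G i)%g|%:R : R) <= ln (#|G i|%:R : R) `^ c1.
Proof.
split=> [[c2 [c2_gt0 [N DH_large]]] | [c1 [c1_gt0 [N small]]]].
  exists ((c + c2 + 1) * 2); split; first by rewrite mulr_gt0 //; lra.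
  have [N2 G_large] := G_unbounded (Num.bound (expR 2 : R)).
  exists (maxn N N2) => i Ii; rewrite geq_max => /andP [Ni N2i].
  have ln_gt2 := ln_natr_gt (G_large i Ii N2i).
  exact: exists_small_class (HsubG i Ii) _ _ _ ln_gt2 (H_small i Ii) (DH_large i Ii Ni).
exists c1; split => //; exists N => i Ii Ni.
have [h Hh [h_neq1 h_small]] := small i Ii Ni.
exact: powRN_le_algC_to_real_DH (HsubG i Ii) _ _ _ Hh h_neq1 h_small.
Qed.
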